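(* Let $K<\mathsf{SL}_2(\mathbf{C})$ be finite, $H\trianglelefteq K$, and $\alpha$ an automorphism of $K/H$ with $\alpha^2=\mathrm{id}$. Let $G=G(K,H,\alpha)$. Then the subgroup $H\wr S_2=H^2\rtimes S_2$ of $K\wr S_2$ is normal in $G$ if and only if $\alpha=1$, and the subgroup $H^2$ is always normal in $G$.
   Context: $K\wr S_2=K^2\rtimes S_2$, where $S_2=\{1,s_{12}\}$ swaps the two factors. $G(K,H,\alpha)$ is the subgroup of $K\wr S_2$ generated by $s_{12}$, $H^2$, and all $(k_1,k_2)\in K^2$ with $k_2H=\alpha(k_1H)$. *)

From HB Require Import structures.
From mathcomp Require Import all_boot all_algebra all_fingroup all_solvable all_field all_character.
Set Implicit Arguments. Unset Strict Implicit. Unset Printing Implicit Defensive.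
Import GRing.Theory.

(* The wreath product  gT wr S_2 = gT^2 ><| S_2.
   An element (a1, a2, s) stands for (a1, a2) * s12^s, where s12 swaps the
   two factors; s12 (b1,b2) s12^-1 = (b2,b1). *)
Section Wreath.
Variable gT : finGroupType.
Local Open Scope group_scope.

Definition wr2 : Type := (gT * gT * bool)%type.
HB.instance Definition _ := Finite.on wr2.

Definition wr_mul (x y : wr2) : wr2 :=
  let: (a1, a2, s) := x in let: (b1, b2, t) := y in
  if s then (a1 * b2, a2 * b1, ~~ t) else (a1 * b1, a2 * b2, t).
Definition wr_one : wr2 := (1, 1, false).
Definition wr_inv (x : wr2) : wr2 :=
  let: (a1, a2, s) := x in
  if s then (a2^-1, a1^-1, true) else (a1^-1, a2^-1, false).

Lemma wr_mulA : associative wr_mul.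
Proof.
by move=> [[a1 a2] []] [[b1 b2] []] [[c1 c2] []]; rewrite /wr_mul /= !mulgA.
Qed.
Lemma wr_mul1 : left_id wr_one wr_mul.
Proof. by move=> [[a1 a2] []]; rewrite /wr_mul /wr_one /= !mul1g. Qed.
Lemma wr_mulV : left_inverse wr_one wr_inv wr_mul.
Proof. by move=> [[a1 a2] []]; rewrite /wr_mul /wr_one /wr_inv /= !mulVg. Qed.

HB.instance Definition _ := Finite_isGroup.Build wr2 wr_mulA wr_mul1 wr_mulV.

Definition s12 : wr2 := (1, 1, true).
Definition base2 (A : {set gT}) : {set wr2} :=
  [set x : wr2 | (x.1.1 \in A) && (x.1.2 \in A) && ~~ x.2].
Definition wreath2 (A : {set gT}) : {set wr2} :=
  [set x : wr2 | (x.1.1 \in A) && (x.1.2 \in A)].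
End Wreath.

Definition GKHa (gT : finGroupType) (K H : {group gT})
  (alpha : {perm coset_of H}) : {set wr2 gT} :=
  <<  [set s12 gT] :|: base2 H
      :|: [set x : wr2 gT | [&& x.1.1 \in K, x.1.2 \in K, ~~ x.2 &
                               coset H x.1.2 == alpha (coset H x.1.1)]] >>%g.
Arguments GKHa [gT] K H alpha.

From HB Require Import structures.
From mathcomp Require Import all_boot all_algebra all_fingroup all_solvable all_field all_character.

(* Conjugating s12 by (k1, k2) gives (k1^-1 k2, k2^-1 k1) s12, which lies in
   H wr S_2 exactly when k1 H = k2 H.  For the generators (k1, k2) of G with
   k2 H = alpha (k1 H) this forces alpha = 1; conversely, when alpha = 1 every
   generator of G is of this form or lies in H wr S_2, so it normalises
   H wr S_2.  The base group H^2 is normalised by all of K wr S_2, which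
   contains G.  Neither the embedding of K into SL_2(C) nor alpha^2 = 1 plays
   a role. *)

Set Implicit Arguments.
Unset Strict Implicit.
Unset Printing Implicit Defensive.

Lemma norm_of_memJ (gT : finGroupType) (B : {set gT}) (x : gT) :
  (forall y, y \in B -> (y ^ x)%g \in B) -> x \in 'N(B)%g.
Proof. by move=> BJ; rewrite inE; apply/subsetP=> _ /imsetP[y By ->]; apply: BJ. Qed.

Section WreathConjugation.

Variable gT : finGroupType.
Implicit Type A : {set gT}.
Local Open Scope group_scope.

Lemma wr2_mulE (x y : wr2 gT) : x * y = wr_mul x y.
Proof. by []. Qed.

Lemma wr2_base_mul_s12 (a1 a2 : gT) : ((a1, a2, false) : wr2 gT) * s12 gT = (a1, a2, true).
Proof. by rewrite wr2_mulE /= !mulg1. Qed.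

Lemma wr2_conj_s12 (y1 y2 : gT) t : ((y1, y2, t) : wr2 gT) ^ s12 gT = (y2, y1, t).
Proof. by case: t; rewrite /conjg !wr2_mulE /= !invg1 !mul1g !mulg1. Qed.

Lemma wr2_conj_base (a1 a2 y1 y2 : gT) t :
  ((y1, y2, t) : wr2 gT) ^ (a1, a2, false) =
  if t then (a1^-1 * y1 * a2, a2^-1 * y2 * a1, true) else (y1 ^ a1, y2 ^ a2, false).
Proof. by case: t; rewrite /conjg !wr2_mulE /= !mulgA. Qed.

Lemma s12_norm_base2 A : s12 gT \in 'N(base2 A).
Proof.
apply: norm_of_memJ => -[[y1 y2] t]; rewrite wr2_conj_s12 !inE /=.
by rewrite [(y2 \in A) && _]andbC.
Qed.

Lemma s12_norm_wreath2 A : s12 gT \in 'N(wreath2 A).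
Proof. by apply: norm_of_memJ => -[[y1 y2] t]; rewrite wr2_conj_s12 !inE /= andbC. Qed.

Lemma s12_wreath2 (G : {group gT}) : s12 gT \in wreath2 G.
Proof. by rewrite !inE group1. Qed.

End WreathConjugation.

Section NormalSubgroup.

Variables (gT : finGroupType) (K H : {group gT}).
Local Open Scope group_scope.
Hypothesis nsHK : H <| K.

Lemma eq_coset_mulVg k1 k2 : k1 \in K -> k2 \in K ->
  (coset H k1 == coset H k2) = (k1^-1 * k2 \in H).
Proof.
move=> Kk1 Kk2; have nHK := subsetP (normal_norm nsHK).
have Nk12 : k1^-1 * k2 \in 'N(H) by rewrite nHK ?groupM ?groupV.
rewrite eq_mulVg1 -morphV ?nHK // -morphM ?groupV ?nHK //.
by apply/eqP/idP=> [/(coset_idr Nk12) | /coset_id].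
Qed.

Lemma mem_twisted_conj k1 k2 y : k1 \in K -> k1^-1 * k2 \in H -> y \in H ->
  k1^-1 * y * k2 \in H.
Proof.
move=> Kk1 Hk12 Hy.
have -> : k1^-1 * y * k2 = y ^ k1 * (k1^-1 * k2) by rewrite /conjg !mulgA mulgK.
by rewrite groupM // memJ_norm // (subsetP (normal_norm nsHK)).
Qed.

Lemma wreath2_norm_base2 : wreath2 K \subset 'N(base2 H).
Proof.
have nHK := subsetP (normal_norm nsHK).
apply/subsetP=> -[[k1 k2] s]; rewrite inE /= => /andP[Kk1 Kk2].
have Nk : ((k1, k2, false) : wr2 gT) \in 'N(base2 H).
  apply: norm_of_memJ => -[[y1 y2] [|]]; rewrite wr2_conj_base !inE /= ?andbF //.
  by rewrite !andbT !memJ_norm ?nHK.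
by case: s; rewrite // -wr2_base_mul_s12 groupM ?s12_norm_base2.
Qed.

Lemma base_norm_wreath2 k1 k2 : k1 \in K -> k2 \in K ->
  coset H k1 = coset H k2 -> ((k1, k2, false) : wr2 gT) \in 'N(wreath2 H).
Proof.
move=> Kk1 Kk2 /eqP; rewrite eq_coset_mulVg // => Hk12.
have Hk21 : k2^-1 * k1 \in H by rewrite -eq_coset_mulVg // eq_sym eq_coset_mulVg.
have nHK := subsetP (normal_norm nsHK).
apply: norm_of_memJ => -[[y1 y2] t]; rewrite wr2_conj_base !inE /= => /andP[Hy1 Hy2].
by case: t; rewrite /= ?mem_twisted_conj ?memJ_norm ?nHK ?Hy1 ?Hy2.
Qed.

End NormalSubgroup.

Definition alpha_graph (gT : finGroupType) (K H : {group gT})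
    (alpha : {perm coset_of H}) : {set wr2 gT} :=
  [set x : wr2 gT | [&& x.1.1 \in K, x.1.2 \in K, ~~ x.2 &
                       coset H x.1.2 == alpha (coset H x.1.1)]].
Arguments alpha_graph [gT] K H alpha.

Lemma GKHaE (gT : finGroupType) (K H : {group gT}) (alpha : {perm coset_of H}) :
  GKHa K H alpha = <<[set s12 gT] :|: base2 H :|: alpha_graph K H alpha>>%g.
Proof. by []. Qed.

Section GKHaNormal.

Variables (gT : finGroupType) (K H : {group gT}) (alpha : {perm coset_of H}).
Local Open Scope group_scope.
Hypothesis nsHK : H <| K.

Lemma s12_GKHa : s12 gT \in GKHa K H alpha.
Proof. by rewrite GKHaE mem_gen // !inE eqxx. Qed.

Lemma base2_sub_GKHa : base2 H \subset GKHa K H alpha.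
Proof. by rewrite GKHaE (subset_trans _ (subset_gen _)) // subsetU // subsetUr. Qed.

Lemma alpha_graph_sub_GKHa : alpha_graph K H alpha \subset GKHa K H alpha.
Proof. by rewrite GKHaE (subset_trans _ (subset_gen _)) // subsetUr. Qed.

Lemma wreath2_sub_GKHa : wreath2 H \subset GKHa K H alpha.
Proof.
apply/subsetP=> -[[h1 h2] s]; rewrite inE /= => Hh.
have Bh : ((h1, h2, false) : wr2 gT) \in GKHa K H alpha.
  by rewrite (subsetP base2_sub_GKHa) // inE /= andbT.
by case: s; rewrite // -wr2_base_mul_s12 groupM ?s12_GKHa.
Qed.

Lemma GKHa_norm_base2 : GKHa K H alpha \subset 'N(base2 H).
Proof.
rewrite GKHaE gen_subG (subset_trans _ (wreath2_norm_base2 nsHK)) //.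
have sHK := subsetP (normal_sub nsHK).
rewrite !subUset sub1set s12_wreath2 /=; apply/andP; split.
  by apply/subsetP=> x; rewrite !inE => /andP[/andP[/sHK -> /sHK ->]].
by apply/subsetP=> x; rewrite !inE => /and4P[-> -> _ _].
Qed.

Lemma coset_eq_of_norm_wreath2 k1 k2 :
    GKHa K H alpha \subset 'N(wreath2 H) -> k1 \in K -> k2 \in K ->
  coset H k2 = alpha (coset H k1) -> coset H k1 = coset H k2.
Proof.
move=> nWG Kk1 Kk2 graph_k; apply/eqP; rewrite (eq_coset_mulVg nsHK) //.
have Gk : ((k1, k2, false) : wr2 gT) \in GKHa K H alpha.
  by rewrite (subsetP alpha_graph_sub_GKHa) // !inE /= Kk1 Kk2 graph_k eqxx.
have := s12_wreath2 H; rewrite -(memJ_norm _ (subsetP nWG _ Gk)) wr2_conj_base.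
by rewrite inE /= mulg1 => /andP[].
Qed.

Lemma alpha_eq1_of_norm_wreath2 : alpha \in Aut (K / H) ->
  GKHa K H alpha \subset 'N(wreath2 H) -> alpha = 1.
Proof.
move=> autA nWG; apply/permP=> c; rewrite perm1.
have [KHc | KHc'] := boolP (c \in K / H); last first.
  by move: autA; rewrite inE => /andP[/out_perm->].
have /morphimP[k1 _ Kk1 Ec] := KHc.
have /morphimP[k2 _ Kk2 Ac] := Aut_closed autA KHc.
rewrite Ac Ec; symmetry; apply: coset_eq_of_norm_wreath2 => //.
by rewrite -Ec.
Qed.

Lemma GKHa1_norm_wreath2 : GKHa K H 1 \subset 'N(wreath2 H).
Proof.
rewrite GKHaE gen_subG !subUset sub1set s12_norm_wreath2 /=.
have sHK := subsetP (normal_sub nsHK).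
apply/andP; split; apply/subsetP=> -[[k1 k2] s] gen_k; rewrite !inE /= in gen_k.
  case/andP: gen_k => /andP[Hk1 Hk2] /negbTE->.
  by apply: (base_norm_wreath2 nsHK); rewrite ?sHK ?coset_id.
case/and4P: gen_k => Kk1 Kk2 /negbTE-> /eqP eq_k.
by apply: (base_norm_wreath2 nsHK); rewrite ?eq_k ?perm1.
Qed.

End GKHaNormal.

Local Open Scope ring_scope.

Theorem lemma4p1 (gT : finGroupType) (K H : {group gT})
    (rG : mx_representation algC K 2) (alpha : {perm coset_of H}) :
  mx_faithful rG ->
  (forall x, x \in K -> \det (rG x) = 1%R) ->
  (H <| K)%g ->
  (alpha \in Aut (K / H))%g ->
  (alpha * alpha = 1)%g ->
  ((wreath2 H <| GKHa K H alpha)%g <-> alpha = 1%g) /\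
  (base2 H <| GKHa K H alpha)%g.
Proof.
move=> _ _ nsHK autA _.
split; last by rewrite /normal base2_sub_GKHa GKHa_norm_base2.
rewrite /normal wreath2_sub_GKHa /=; split=> [nWG | ->].
  exact: (alpha_eq1_of_norm_wreath2 nsHK).
exact: (GKHa1_norm_wreath2 nsHK).
Qed.
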